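(* Let $x,y,z,a,b,c\ge 0$ be reals with $x^2+y^2+z^2=a^2+b^2+c^2$ and $x^3+y^3+z^3=a^3+b^3+c^3$. Then \[ (x,y,z,-z,-y,-x)\succ_4(a,b,c,-c,-b,-a) \] if and only if $\max(x,y,z)\ge\max(a,b,c)$.
   Context: For $u,v\in\mathbb{R}^n$, $u\succ_4 v$ means $\sum_{i=1}^n f(u_i)\ge\sum_{i=1}^n f(v_i)$ for every four times differentiable $f:\mathbb{R}\to\mathbb{R}$ with $f^{(4)}\ge 0$. *)

From Stdlib Require Import Reals List.
Import ListNotations.
Open Scope R_scope.

Definition four_diff_nonneg (f : R -> R) : Prop :=
  exists f1 f2 f3 f4 : R -> R,
    (forall t, derivable_pt_lim f t (f1 t)) /\
    (forall t, derivable_pt_lim f1 t (f2 t)) /\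
    (forall t, derivable_pt_lim f2 t (f3 t)) /\
    (forall t, derivable_pt_lim f3 t (f4 t)) /\
    (forall t, 0 <= f4 t).

Definition sumf (f : R -> R) (u : list R) : R :=
  fold_right (fun a acc => f a + acc) 0 u.

Definition maj4 (u v : list R) : Prop :=
  length u = length v /\
  forall f : R -> R, four_diff_nonneg f -> sumf f u >= sumf f v.

From Stdlib Require Import Reals List.
Import ListNotations.
Open Scope R_scope.
From Stdlib Require Import Lra Lia Psatz Permutation.
From Coquelicot Require Import Coquelicot.

(* Sufficiency.  For u, v of equal length with equal power sums of orders
   0..3, Taylor's formula with integral remainder gives
     sum f(u) - sum f(v) = (1/6) int f^(4)(s) (K_u(s) - K_v(s)) ds,
   with the kernel K_u(s) = sum_i (u_i - s)_+^3, so K_v <= K_u suffices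
   ([maj4_of_kernel]; the integral is replaced by a monotonicity argument on
   truncated Taylor remainders).  For symmetrised vectors the moment
   conditions reduce to the hypotheses and the kernel comparison reduces to
   t >= 0 and the triples X, A ([kernel_symm_le]).  After sorting, equal power
   sums force the interlacing x >= a >= b >= y >= z >= c, and the kernel
   inequality is checked on t >= b, y <= t <= b and 0 <= t <= y, using the
   identities sum gcub m (X) = sum gcub m (A) for all m ([kernel3_sorted]).

   Necessity.  Testing with f(t) = exp(k t), k large, shows that no entry of
   A* exceeds max X* ([maj_upper_bound]). *)

Lemma sumf_nil (g : R -> R) : sumf g [] = 0.
Proof. reflexivity. Qed.

Lemma sumf_cons (g : R -> R) (w : R) (L : list R) : sumf g (w :: L) = g w + sumf g L.
Proof. reflexivity. Qed.

Lemma sumf_triple (g : R -> R) (p q r : R) : sumf g [p; q; r] = g p + g q + g r.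
Proof. rewrite !sumf_cons, sumf_nil. ring. Qed.

Lemma sumf_ext_in (g h : R -> R) (L : list R) :
  (forall w, In w L -> g w = h w) -> sumf g L = sumf h L.
Proof.
  induction L as [|w L IH]; intro E; [reflexivity|].
  rewrite !sumf_cons, (E w (in_eq w L)), IH; [reflexivity|].
  intros v Hv. apply E, in_cons, Hv.
Qed.

Lemma sumf_zero (L : list R) : sumf (fun _ => 0) L = 0.
Proof. induction L as [|w L IH]; [reflexivity|]. rewrite sumf_cons, IH. ring. Qed.

Lemma sumf_add (g h : R -> R) (L : list R) :
  sumf (fun w => g w + h w) L = sumf g L + sumf h L.
Proof. induction L as [|w L IH]; [simpl; ring|]. rewrite !sumf_cons, IH. ring. Qed.

Lemma sumf_sub (g h : R -> R) (L : list R) :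
  sumf (fun w => g w - h w) L = sumf g L - sumf h L.
Proof. induction L as [|w L IH]; [simpl; ring|]. rewrite !sumf_cons, IH. ring. Qed.

Lemma sumf_scal (c : R) (g : R -> R) (L : list R) :
  sumf (fun w => c * g w) L = c * sumf g L.
Proof. induction L as [|w L IH]; [simpl; ring|]. rewrite !sumf_cons, IH. ring. Qed.

Lemma sumf_app (g : R -> R) (L1 L2 : list R) : sumf g (L1 ++ L2) = sumf g L1 + sumf g L2.
Proof. induction L1 as [|w L1 IH]; [simpl; ring|]. simpl app. rewrite !sumf_cons, IH. ring. Qed.

Lemma sumf_rev (g : R -> R) (L : list R) : sumf g (rev L) = sumf g L.
Proof.
  induction L as [|w L IH]; [reflexivity|]. simpl rev.
  rewrite sumf_app, IH, !sumf_cons, sumf_nil. ring.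
Qed.

Lemma sumf_map (g h : R -> R) (L : list R) : sumf g (map h L) = sumf (fun w => g (h w)) L.
Proof. induction L as [|w L IH]; [reflexivity|]. simpl map. rewrite !sumf_cons, IH. reflexivity. Qed.

Lemma sumf_perm (g : R -> R) (L1 L2 : list R) : Permutation L1 L2 -> sumf g L1 = sumf g L2.
Proof.
  induction 1 as [| w L1 L2 _ IH | v w L | L1 L2 L3 _ IH12 _ IH23].
  - reflexivity.
  - rewrite !sumf_cons, IH. reflexivity.
  - rewrite !sumf_cons. ring.
  - rewrite IH12, IH23. reflexivity.
Qed.

Lemma sumf_le_const (g : R -> R) (C : R) (L : list R) :
  (forall w, In w L -> g w <= C) -> sumf g L <= INR (length L) * C.
Proof.
  induction L as [|w L IH]; intro H; [simpl; lra|].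
  rewrite sumf_cons, length_cons, S_INR.
  assert (g w <= C) by (apply H, in_eq).
  assert (sumf g L <= INR (length L) * C) by (apply IH; intros v Hv; apply H, in_cons, Hv).
  lra.
Qed.

Lemma sumf_nonneg (g : R -> R) (L : list R) :
  (forall w, In w L -> 0 <= g w) -> 0 <= sumf g L.
Proof.
  induction L as [|w L IH]; intro H; [simpl; lra|]. rewrite sumf_cons.
  assert (0 <= g w) by (apply H, in_eq).
  assert (0 <= sumf g L) by (apply IH; intros v Hv; apply H, in_cons, Hv).
  lra.
Qed.

Lemma sumf_ge_member (g : R -> R) (L : list R) (v : R) :
  (forall w, In w L -> 0 <= g w) -> In v L -> g v <= sumf g L.
Proof.
  induction L as [|w L IH]; intros H Hv; [destruct Hv|]. rewrite sumf_cons.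
  assert (Hw : 0 <= g w) by (apply H, in_eq).
  assert (Hrest : forall u, In u L -> 0 <= g u) by (intros u Hu; apply H, in_cons, Hu).
  destruct Hv as [<- | Hv].
  - pose proof (sumf_nonneg g L Hrest). lra.
  - pose proof (IH Hrest Hv). lra.
Qed.

(* Power sums.  [equal_moments3 U V] says that U and V have the same power
   sums of orders 0 to 3; then every cubic polynomial has the same sum over
   U and over V, which is what makes the Taylor polynomial part cancel. *)
Definition moment (k : nat) (L : list R) : R := sumf (fun w => w ^ k) L.

Definition equal_moments3 (U V : list R) : Prop :=
  forall k, (k <= 3)%nat -> moment k U = moment k V.

Lemma sumf_cubic (L : list R) (c0 c1 c2 c3 : R) :
  sumf (fun w => c0 + c1 * w + c2 * w ^ 2 + c3 * w ^ 3) L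
  = c0 * moment 0 L + c1 * moment 1 L + c2 * moment 2 L + c3 * moment 3 L.
Proof.
  unfold moment. induction L as [|w L IH]; [simpl; ring|]. rewrite !sumf_cons, IH. ring.
Qed.

Lemma cubic_sums_eq (U V : list R) (p c0 c1 c2 c3 : R) :
  equal_moments3 U V ->
  sumf (fun w => c0 + c1 * (w - p) + c2 * (w - p) ^ 2 + c3 * (w - p) ^ 3) U
  = sumf (fun w => c0 + c1 * (w - p) + c2 * (w - p) ^ 2 + c3 * (w - p) ^ 3) V.
Proof.
  intro HM.
  assert (E : forall L,
    sumf (fun w => c0 + c1 * (w - p) + c2 * (w - p) ^ 2 + c3 * (w - p) ^ 3) L
    = sumf (fun w => (c0 - c1 * p + c2 * p ^ 2 - c3 * p ^ 3) + (c1 - 2 * c2 * p + 3 * c3 * p ^ 2) * w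
                     + (c2 - 3 * c3 * p) * w ^ 2 + c3 * w ^ 3) L)
    by (intro L; apply sumf_ext_in; intros; ring).
  rewrite !E, !sumf_cubic, !HM by lia. reflexivity.
Qed.

Definition pos_cube (u : R) : R := if Rlt_dec 0 u then u ^ 3 else 0.

Lemma pos_cube_of_nonneg (u : R) : 0 <= u -> pos_cube u = u ^ 3.
Proof.
  intro Hu. unfold pos_cube. destruct (Rlt_dec 0 u); [reflexivity|].
  replace u with 0 by lra. ring.
Qed.

Lemma pos_cube_of_nonpos (u : R) : u <= 0 -> pos_cube u = 0.
Proof. intro Hu. unfold pos_cube. destruct (Rlt_dec 0 u); [lra | reflexivity]. Qed.

Lemma pos_cube_mono (u v : R) : u <= v -> pos_cube u <= pos_cube v.
Proof.
  intro Huv. destruct (Rle_dec u 0) as [Hu | Hu].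
  - rewrite (pos_cube_of_nonpos u Hu). destruct (Rle_dec v 0) as [Hv | Hv].
    + rewrite pos_cube_of_nonpos; lra.
    + rewrite pos_cube_of_nonneg by lra. apply pow_le. lra.
  - rewrite !pos_cube_of_nonneg by lra. apply pow_incr. lra.
Qed.

(* (u)_+^3 - (-u)_+^3 = u^3: the kernel at s and at -s differ by a polynomial. *)
Lemma pos_cube_reflect (u : R) : pos_cube u = u ^ 3 + pos_cube (- u).
Proof.
  destruct (Rle_dec 0 u).
  - rewrite pos_cube_of_nonneg, (pos_cube_of_nonpos (- u)) by lra. ring.
  - rewrite pos_cube_of_nonpos, (pos_cube_of_nonneg (- u)) by lra. ring.
Qed.

Definition kernel (L : list R) (s : R) : R := sumf (fun w => pos_cube (w - s)) L.

Lemma continuity_of_is_derive (g : R -> R) (s dg : R) : is_derive g s dg -> continuity_pt g s.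
Proof. intro H. apply derivable_continuous_pt. exists dg. apply is_derive_Reals, H. Qed.

(* Rmin is 1-Lipschitz, hence continuous. *)
Lemma continuity_Rmin_l (w s : R) : continuity_pt (fun u => Rmin u w) s.
Proof.
  intros eps Heps. exists eps. split; [exact Heps|]. intros u [_ Hu].
  simpl in *. unfold Rdist, Rmin in *.
  destruct (Rle_dec u w), (Rle_dec s w); unfold Rabs in *; repeat destruct Rcase_abs; lra.
Qed.

Lemma nonincreasing_of_deriv (g dg : R -> R) (p q : R) : p <= q ->
  (forall s, p <= s <= q -> continuity_pt g s) ->
  (forall s, p < s < q -> is_derive g s (dg s) /\ dg s <= 0) -> g q <= g p.
Proof.
  intros Hpq Hc Hd. destruct (Req_dec p q) as [<- | Hne]; [lra|].
  assert (Hder : forall s, p < s < q -> derivable_pt g s)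
    by (intros s Hs; exists (dg s); apply is_derive_Reals, Hd, Hs).
  destruct (MVT g id p q Hder (fun s _ => derivable_pt_id s)) as (s & Hs & E);
    [lra | exact Hc | intros; apply derivable_continuous_pt, derivable_pt_id |].
  rewrite (derive_pt_eq_0 g s (dg s)), (derive_pt_eq_0 id s 1) in E
    by (apply derivable_pt_lim_id || apply is_derive_Reals, Hd, Hs).
  unfold id in E. destruct (Hd s Hs) as [_ Hneg]. nra.
Qed.

(* The same, when the derivative is only known off a finite set E of points:
   split [p, q] at each point of E lying inside. *)
Lemma nonincreasing_except (g dg : R -> R) (E : list R) :
  (forall s, continuity_pt g s) -> forall p q, p <= q ->
  (forall s, p < s < q -> ~ In s E -> is_derive g s (dg s) /\ dg s <= 0) -> g q <= g p.
Proof.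
  intro Hc. induction E as [|r E IH]; intros p q Hpq Hd.
  - apply (nonincreasing_of_deriv g dg); [exact Hpq | intros; apply Hc | intros s Hs; apply Hd; auto].
  - assert (Hsub : forall p' q', p <= p' -> p' <= q' -> q' <= q -> ~ (p' < r < q') -> g q' <= g p').
    { intros p' q' H1 H2 H3 Hr. apply IH; [exact H2|]. intros s Hs Hn. apply Hd; [lra|].
      intros [-> | Hin]; [exact (Hr Hs) | exact (Hn Hin)]. }
    destruct (Rle_lt_dec r p); [apply Hsub; lra|].
    destruct (Rle_lt_dec q r); [apply Hsub; lra|].
    apply Rle_trans with (g r); apply Hsub; lra.
Qed.

Lemma list_bounded (L : list R) : exists B, 0 < B /\ forall w, In w L -> - B < w < B.
Proof.
  induction L as [|w L [B [HB IH]]]; [exists 1; split; [lra | intros w []]|].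
  exists (B + Rabs w). split; [pose proof (Rabs_pos w); lra|].
  intros v [-> | Hv].
  - pose proof (Rle_abs v). pose proof (Rle_abs (- v)). rewrite Rabs_Ropp in *. lra.
  - pose proof (IH v Hv). pose proof (Rabs_pos w). lra.
Qed.

(* As a function of s,
   its derivative is -f4(s) (w - s)^3 / 6 (all other terms telescope).
   Freezing s at w for s >= w gives [trunc_rem], whose derivative is
   -f4(s) (w - s)_+^3 / 6: summing over a vector produces its kernel.  This is
   Taylor's formula with integral remainder, in differential form. *)
Section TaylorRemainder.

Variables f f1 f2 f3 f4 : R -> R.
Hypothesis D1 : forall t, is_derive f t (f1 t).
Hypothesis D2 : forall t, is_derive f1 t (f2 t).
Hypothesis D3 : forall t, is_derive f2 t (f3 t).
Hypothesis D4 : forall t, is_derive f3 t (f4 t).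

Definition taylor_rem (w s : R) : R :=
  f w - f s - f1 s * (w - s) - f2 s * (w - s) ^ 2 / 2 - f3 s * (w - s) ^ 3 / 6.

Lemma taylor_rem_deriv (w s : R) : is_derive (taylor_rem w) s (- f4 s * (w - s) ^ 3 / 6).
Proof.
  unfold taylor_rem. auto_derive.
  - repeat split; [exists (f1 s) | exists (f2 s) | exists (f3 s) | exists (f4 s)]; auto.
  - replace (Derive (fun t => f t) s) with (f1 s) by (symmetry; apply is_derive_unique, D1).
    replace (Derive (fun t => f1 t) s) with (f2 s) by (symmetry; apply is_derive_unique, D2).
    replace (Derive (fun t => f2 t) s) with (f3 s) by (symmetry; apply is_derive_unique, D3).
    replace (Derive (fun t => f3 t) s) with (f4 s) by (symmetry; apply is_derive_unique, D4).
    field.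
Qed.

Definition trunc_rem (w s : R) : R := taylor_rem w (Rmin s w).

Lemma trunc_rem_below (w s : R) : s <= w -> trunc_rem w s = taylor_rem w s.
Proof. intro H. unfold trunc_rem. rewrite Rmin_left by exact H. reflexivity. Qed.

Lemma trunc_rem_above (w s : R) : w <= s -> trunc_rem w s = 0.
Proof. intro H. unfold trunc_rem, taylor_rem. rewrite Rmin_right by exact H. field. Qed.

Lemma trunc_rem_cont (w s : R) : continuity_pt (trunc_rem w) s.
Proof.
  apply (continuity_pt_comp (fun u => Rmin u w) (taylor_rem w)).
  - apply continuity_Rmin_l.
  - eapply continuity_of_is_derive. apply taylor_rem_deriv.
Qed.

Lemma trunc_rem_deriv (w s : R) : s <> w ->
  is_derive (trunc_rem w) s (- f4 s * pos_cube (w - s) / 6).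
Proof.
  intro Hne. destruct (Rlt_dec s w) as [Hlt | Hge].
  - rewrite pos_cube_of_nonneg by lra.
    apply is_derive_ext_loc with (taylor_rem w); [|apply taylor_rem_deriv].
    apply filter_imp with (fun u => u < w); [|exact (open_lt w s Hlt)].
    intros u Hu. symmetry. apply trunc_rem_below. lra.
  - rewrite pos_cube_of_nonpos by lra. replace (- f4 s * 0 / 6) with 0 by field.
    apply is_derive_ext_loc with (fun _ => 0); [|exact (is_derive_const 0 s)].
    apply filter_imp with (fun u => w < u); [|apply open_gt; lra].
    intros u Hu. symmetry. apply trunc_rem_above. lra.
Qed.

Lemma sum_trunc_rem_cont (L : list R) (s : R) :
  continuity_pt (fun s => sumf (fun w => trunc_rem w s) L) s.
Proof.
  induction L as [|w L IH].
  - apply continuity_pt_const. intros u v. reflexivity.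
  - apply (continuity_pt_plus (trunc_rem w)); [apply trunc_rem_cont | exact IH].
Qed.

Lemma sum_trunc_rem_deriv (L : list R) (s : R) : ~ In s L ->
  is_derive (fun s => sumf (fun w => trunc_rem w s) L) s (- f4 s * kernel L s / 6).
Proof.
  unfold kernel. induction L as [|w L IH]; intro Hn.
  - rewrite sumf_nil. replace (- f4 s * 0 / 6) with 0 by field. exact (is_derive_const 0 s).
  - rewrite sumf_cons.
    replace (- f4 s * (pos_cube (w - s) + sumf (fun v => pos_cube (v - s)) L) / 6)
      with (- f4 s * pos_cube (w - s) / 6 + - f4 s * sumf (fun v => pos_cube (v - s)) L / 6)
      by field.
    apply (is_derive_plus (trunc_rem w)).
    + apply trunc_rem_deriv. intro E. apply Hn. left. auto.
    + apply IH. intro E. apply Hn. right. exact E.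
Qed.

(* Psi(s) = sum_U trunc_rem - sum_V trunc_rem has
   derivative -f4(s) (K_U(s) - K_V(s)) / 6 <= 0, so Psi(B) <= Psi(-B).  Far to
   the right Psi vanishes; far to the left it equals sum f(U) - sum f(V) minus
   sums of a cubic polynomial, which cancel by the moment hypothesis. *)
Lemma kernel_majorization (U V : list R) :
  equal_moments3 U V -> (forall t, 0 <= f4 t) ->
  (forall s, kernel V s <= kernel U s) -> sumf f V <= sumf f U.
Proof.
  intros HM Hf4 HK.
  destruct (list_bounded (U ++ V)) as (B & HB & Hin).
  set (Psi := fun s => sumf (fun w => trunc_rem w s) U - sumf (fun w => trunc_rem w s) V).
  assert (Hdecr : Psi B <= Psi (- B)).
  { apply (nonincreasing_except Psi (fun s => - f4 s * (kernel U s - kernel V s) / 6) (U ++ V));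
      [intro s; apply continuity_pt_minus; apply sum_trunc_rem_cont | lra |].
    intros s _ Hn. split.
    - replace (- f4 s * (kernel U s - kernel V s) / 6)
        with (- f4 s * kernel U s / 6 - - f4 s * kernel V s / 6) by field.
      apply (is_derive_minus (fun s => sumf (fun w => trunc_rem w s) U)
        (fun s => sumf (fun w => trunc_rem w s) V)); apply sum_trunc_rem_deriv; intro E; apply Hn, in_or_app; auto.
    - assert (0 <= f4 s * (kernel U s - kernel V s))
        by (apply Rmult_le_pos; [apply Hf4 | specialize (HK s); lra]).
      lra. }
  assert (Hright : Psi B = 0).
  { unfold Psi. rewrite !(sumf_ext_in (fun w => trunc_rem w B) (fun _ => 0)), !sumf_zero;
      [ring | |]; intros w Hw; apply trunc_rem_above;
      destruct (Hin w ltac:(apply in_or_app; auto)); lra. }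
  assert (Hleft : Psi (- B) = sumf f U - sumf f V).
  { set (P := fun w => f (- B) + f1 (- B) * (w - - B) + f2 (- B) / 2 * (w - - B) ^ 2
                       + f3 (- B) / 6 * (w - - B) ^ 3).
    assert (E : forall L, (forall w, In w L -> In w (U ++ V)) ->
              sumf (fun w => trunc_rem w (- B)) L = sumf f L - sumf P L).
    { intros L HL. rewrite <- sumf_sub. apply sumf_ext_in. intros w Hw.
      destruct (Hin w (HL w Hw)). rewrite trunc_rem_below by lra.
      unfold taylor_rem, P. field. }
    unfold Psi. rewrite !E by (intros; apply in_or_app; auto).
    unfold P. rewrite (cubic_sums_eq U V) by exact HM. ring. }
  lra.
Qed.

End TaylorRemainder.

Lemma maj4_of_kernel (U V : list R) :
  equal_moments3 U V -> (forall s, kernel V s <= kernel U s) ->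
  forall f, four_diff_nonneg f -> sumf f U >= sumf f V.
Proof.
  intros HM HK f (f1 & f2 & f3 & f4 & H1 & H2 & H3 & H4 & H5).
  apply Rle_ge, (kernel_majorization f f1 f2 f3 f4);
    try (intro t; apply is_derive_Reals; auto); assumption.
Qed.

Lemma exp_test_function (k : R) : four_diff_nonneg (fun t => exp (k * t)).
Proof.
  exists (fun t => k * exp (k * t)), (fun t => k ^ 2 * exp (k * t)),
    (fun t => k ^ 3 * exp (k * t)), (fun t => k ^ 4 * exp (k * t)).
  repeat split; try (intro t; apply is_derive_Reals; auto_derive; auto; ring).
  intro t. apply Rmult_le_pos; [|left; apply exp_pos].
  replace (k ^ 4) with ((k ^ 2) ^ 2) by ring. apply pow2_ge_0.
Qed.

(* Necessary condition: if U 4-majorizes V, no entry of V exceeds an upper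
   bound M of U.  Otherwise exp(k t) with k large makes the single term
   exp(k v) outweigh the whole sum over U. *)
Lemma maj_upper_bound (U V : list R) (M : R) :
  (forall f, four_diff_nonneg f -> sumf f U >= sumf f V) ->
  (forall u, In u U -> u <= M) -> forall v, In v V -> v <= M.
Proof.
  intros Hmaj HU v Hv. destruct (Rle_lt_dec v M) as [| HvM]; [assumption | exfalso].
  set (n := INR (length U)). set (k := (n + 1) / (v - M)).
  assert (Hn : 0 <= n) by apply pos_INR.
  assert (Hk : 0 < k) by (apply Rdiv_lt_0_compat; lra).
  specialize (Hmaj _ (exp_test_function k)).
  assert (Hupper : sumf (fun t => exp (k * t)) U <= n * exp (k * M)).
  { apply sumf_le_const. intros u Hu.
    destruct (Rmult_le_compat_l k u M ltac:(lra) (HU u Hu)) as [Hlt | ->]; [|lra].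
    left. apply exp_increasing, Hlt. }
  assert (Hlower : exp (k * v) <= sumf (fun t => exp (k * t)) V)
    by (apply (sumf_ge_member (fun t => exp (k * t))); [intros; left; apply exp_pos | exact Hv]).
  assert (Ev : exp (k * v) = exp (k * M) * exp (n + 1)).
  { rewrite <- exp_plus. f_equal. unfold k. field. lra. }
  assert (Hbig : 1 + (n + 1) < exp (n + 1)) by (apply exp_ineq1; lra).
  assert (n * exp (k * M) < exp (k * M) * exp (n + 1))
    by (pose proof (exp_pos (k * M)); nra).
  lra.
Qed.

(* The symmetrised vector (L, -rev L); for L = [x; y; z] this is
   [x; y; z; -z; -y; -x]. *)
Definition symm (L : list R) : list R := L ++ rev (map Ropp L).

Lemma sumf_symm (g : R -> R) (L : list R) :
  sumf g (symm L) = sumf g L + sumf (fun w => g (- w)) L.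
Proof. unfold symm. rewrite sumf_app, sumf_rev, sumf_map. reflexivity. Qed.

Lemma moment_symm (k : nat) (L : list R) : moment k (symm L) = (1 + (-1) ^ k) * moment k L.
Proof.
  unfold moment. rewrite sumf_symm, (sumf_ext_in (fun w => (- w) ^ k) (fun w => (-1) ^ k * w ^ k)),
    sumf_scal.
  - ring.
  - intros w _. rewrite <- Rpow_mult_distr. f_equal. ring.
Qed.

Lemma equal_moments3_symm (X A : list R) :
  moment 0 X = moment 0 A -> moment 2 X = moment 2 A -> equal_moments3 (symm X) (symm A).
Proof.
  intros H0 H2 k Hk. rewrite !moment_symm.
  destruct k as [|[|[|[|k]]]]; [rewrite H0 | | rewrite H2 | | lia]; simpl; ring.
Qed.

Lemma kernel_symm_nonneg (L : list R) (t : R) :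
  (forall w, In w L -> 0 <= w) -> 0 <= t -> kernel (symm L) t = kernel L t.
Proof.
  intros HL Ht. unfold kernel. rewrite sumf_symm.
  rewrite (sumf_ext_in (fun w => pos_cube (- w - t)) (fun _ => 0)), sumf_zero; [ring|].
  intros w Hw. apply pos_cube_of_nonpos. pose proof (HL w Hw). lra.
Qed.

Lemma kernel_symm_neg (L : list R) (t : R) :
  (forall w, In w L -> 0 <= w) -> 0 <= t ->
  kernel (symm L) (- t) = kernel L t + sumf (fun w => 2 * t ^ 3 + 6 * t * w ^ 2) L.
Proof.
  intros HL Ht. unfold kernel. rewrite sumf_symm, <- !sumf_add. apply sumf_ext_in.
  intros w Hw. pose proof (HL w Hw).
  rewrite (pos_cube_of_nonneg (w - - t)), (pos_cube_reflect (- w - - t)) by lra.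
  replace (- (- w - - t)) with (w - t) by ring. ring.
Qed.

Lemma kernel_symm_le (X A : list R) :
  (forall w, In w X -> 0 <= w) -> (forall w, In w A -> 0 <= w) ->
  moment 0 X = moment 0 A -> moment 2 X = moment 2 A ->
  (forall t, 0 <= t -> kernel A t <= kernel X t) ->
  forall s, kernel (symm A) s <= kernel (symm X) s.
Proof.
  intros HX HA H0 H2 HK s. destruct (Rle_lt_dec 0 s) as [Hs | Hs].
  - rewrite !kernel_symm_nonneg by assumption. apply HK, Hs.
  - replace s with (- (- s)) by ring. rewrite !kernel_symm_neg by (assumption || lra).
    assert (E : forall L, sumf (fun w => 2 * (- s) ^ 3 + 6 * (- s) * w ^ 2) L
                          = 2 * (- s) ^ 3 * moment 0 L + 6 * (- s) * moment 2 L).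
    { intro L. rewrite (sumf_ext_in _ (fun w => 2 * (- s) ^ 3 + 0 * w + 6 * (- s) * w ^ 2 + 0 * w ^ 3)),
        sumf_cubic by (intros; ring). ring. }
    rewrite !E, H0, H2. specialize (HK (- s) ltac:(lra)). lra.
Qed.

(* For m >= 0, gcub m t = 2t^3 - 3mt^2 decreases on [0, m] and increases on
   [m, oo).  Equal power sums of orders 2 and 3 give equal sums of gcub m for
   every m: this one-parameter family drives all the comparisons below. *)
Definition gcub (m t : R) : R := 2 * t ^ 3 - 3 * m * t ^ 2.

Lemma gcub_balance (x y z a b c m : R) :
  x ^ 2 + y ^ 2 + z ^ 2 = a ^ 2 + b ^ 2 + c ^ 2 ->
  x ^ 3 + y ^ 3 + z ^ 3 = a ^ 3 + b ^ 3 + c ^ 3 ->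
  gcub m x + gcub m y + gcub m z = gcub m a + gcub m b + gcub m c.
Proof.
  intros h2 h3. unfold gcub.
  assert (m * (x ^ 2 + y ^ 2 + z ^ 2) = m * (a ^ 2 + b ^ 2 + c ^ 2)) by (rewrite h2; reflexivity).
  lra.
Qed.

Lemma gcub_min (m p : R) : 0 <= m -> 0 <= p -> gcub m m <= gcub m p.
Proof.
  intros. unfold gcub.
  assert (0 <= (p - m) ^ 2 * (2 * p + m)) by (apply Rmult_le_pos; [apply pow2_ge_0 | lra]).
  lra.
Qed.

Lemma gcub_incr_strict (m p q : R) : 0 <= m -> m <= q -> q < p -> gcub m q < gcub m p.
Proof.
  intros. unfold gcub.
  assert (0 < (p - q) * ((p - q) * (2 * p + q) + 3 * (q - m) * (p + q)))
    by (apply Rmult_lt_0_compat; nra).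
  lra.
Qed.

Lemma gcub_incr (m p q : R) : 0 <= m -> m <= q -> q <= p -> gcub m q <= gcub m p.
Proof.
  intros Hm Hmq [Hqp | ->]; [left; apply gcub_incr_strict; assumption | lra].
Qed.

Lemma gcub_decr_strict (m p q : R) : 0 <= p -> p < q -> q <= m -> gcub m q < gcub m p.
Proof.
  intros. unfold gcub.
  assert (0 < (q - p) * ((q - p) * (2 * p + q) + 3 * (m - q) * (p + q)))
    by (apply Rmult_lt_0_compat; nra).
  lra.
Qed.

Lemma interlacing (x y z a b c : R) :
  0 <= z -> z <= y -> y <= x -> 0 <= c -> c <= b -> b <= a -> a <= x ->
  x ^ 2 + y ^ 2 + z ^ 2 = a ^ 2 + b ^ 2 + c ^ 2 ->
  x ^ 3 + y ^ 3 + z ^ 3 = a ^ 3 + b ^ 3 + c ^ 3 ->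
  y <= b /\ c <= z.
Proof.
  intros. split.
  - destruct (Rle_lt_dec y b) as [| Hby]; [assumption | exfalso].
    pose proof (gcub_balance x y z a b c c H6 H7).
    pose proof (gcub_incr c x a ltac:(lra) ltac:(lra) ltac:(lra)).
    pose proof (gcub_incr_strict c y b ltac:(lra) ltac:(lra) Hby).
    pose proof (gcub_min c z ltac:(lra) ltac:(lra)).
    lra.
  - destruct (Rle_lt_dec c z) as [| Hzc]; [assumption | exfalso].
    pose proof (gcub_balance x y z a b c b H6 H7).
    pose proof (gcub_incr b x a ltac:(lra) ltac:(lra) ltac:(lra)).
    pose proof (gcub_min b y ltac:(lra) ltac:(lra)).
    pose proof (gcub_decr_strict b z c ltac:(lra) Hzc ltac:(lra)).
    lra.
Qed.

(* (u - y)^2 / (u (u - z)) is nondecreasing in u >= y. *)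
Lemma cube_ratio_mono (u a y z : R) : 0 <= z -> z <= y -> y <= a -> a <= u ->
  (a - y) ^ 2 * (u * (u - z)) <= (u - y) ^ 2 * (a * (a - z)).
Proof.
  intros.
  assert ((a - y) * u <= (u - y) * a) by nra.
  assert ((a - y) * (u - z) <= (u - y) * (a - z)) by nra.
  assert (((a - y) * u) * ((a - y) * (u - z)) <= ((u - y) * a) * ((u - y) * (a - z)))
    by (apply Rmult_le_compat; nra).
  lra.
Qed.

(* Cauchy mean-value type bounds comparing increments of (u - y)^3 with
   increments of gcub z u: from a to x (below), and from y to b (above). *)
Lemma secant_lower (x a y z : R) : 0 <= z -> z <= y -> y <= a -> a <= x ->
  (a - y) ^ 2 * (gcub z x - gcub z a) <= 2 * ((x - y) ^ 3 - (a - y) ^ 3) * (a * (a - z)).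
Proof.
  intros.
  set (G := fun u => (a - y) ^ 2 * (gcub z u - gcub z a) - 2 * ((u - y) ^ 3 - (a - y) ^ 3) * (a * (a - z))).
  set (dG := fun u => (a - y) ^ 2 * (6 * u ^ 2 - 6 * z * u) - 6 * (u - y) ^ 2 * (a * (a - z))).
  assert (HG : forall u, is_derive G u (dG u))
    by (intro u; unfold G, dG, gcub; auto_derive; [exact I | ring]).
  assert (G x <= G a).
  { apply (nonincreasing_of_deriv G dG); [assumption | intros; eapply continuity_of_is_derive, HG |].
    intros u Hu. split; [apply HG|]. unfold dG.
    pose proof (cube_ratio_mono u a y z ltac:(lra) ltac:(lra) ltac:(lra) ltac:(lra)). lra. }
  unfold G in *. lra.
Qed.

Lemma secant_upper (b y z : R) : 0 <= z -> z <= y -> y <= b ->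
  2 * (b - y) * (b * (b - z)) <= gcub z b - gcub z y.
Proof.
  intros. unfold gcub.
  assert (0 <= y * (b - y) * (y - z)) by (apply Rmult_le_pos; [apply Rmult_le_pos |]; lra).
  assert (0 <= (b - y) ^ 2 * (2 * y - z)) by (apply Rmult_le_pos; [apply pow2_ge_0 | lra]).
  lra.
Qed.

(* The kernel difference at t = y is nonnegative:
   (b - y)^3 <= (x - y)^3 - (a - y)^3.  The hypothesis on gcub z comes from
   the power sums; chain the secant bounds through the ratio monotonicity. *)
Lemma gap_at_y (x a b y z : R) : 0 <= z -> z <= y -> y <= b -> b <= a -> a <= x ->
  gcub z b - gcub z y <= gcub z x - gcub z a ->
  (b - y) ^ 3 <= (x - y) ^ 3 - (a - y) ^ 3.
Proof.
  intros Hz Hzy Hyb Hba Hax HW.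
  destruct (Req_dec b y) as [-> | Hby].
  - replace ((y - y) ^ 3) with 0 by ring.
    assert ((a - y) ^ 3 <= (x - y) ^ 3) by (apply pow_incr; lra). lra.
  - pose proof (secant_lower x a y z Hz Hzy ltac:(lra) Hax) as Hlow.
    pose proof (secant_upper b y z Hz Hzy Hyb) as Hup.
    pose proof (cube_ratio_mono a b y z Hz Hzy Hyb Hba) as Hratio.
    set (A := a * (a - z)) in *. set (B := b * (b - z)) in *.
    set (W1 := gcub z x - gcub z a) in *. set (W2 := gcub z b - gcub z y) in *.
    assert (HA : 0 < A) by (apply Rmult_lt_0_compat; lra).
    assert (HB : 0 < B) by (apply Rmult_lt_0_compat; lra).
    assert (HW2 : 0 <= W2) by (assert (0 <= 2 * (b - y) * B) by (apply Rmult_le_pos; lra); lra).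
    assert (S1 : (b - y) ^ 2 * A * (2 * (b - y) * B) <= (b - y) ^ 2 * A * W2)
      by (apply Rmult_le_compat_l; [apply Rmult_le_pos; [apply pow2_ge_0 | lra] | exact Hup]).
    assert (S2 : (b - y) ^ 2 * A * W2 <= (a - y) ^ 2 * B * W2)
      by (apply Rmult_le_compat_r; [exact HW2 | lra]).
    assert (S3 : (a - y) ^ 2 * B * W2 <= (a - y) ^ 2 * B * W1)
      by (apply Rmult_le_compat_l; [apply Rmult_le_pos; [apply pow2_ge_0 | lra] | exact HW]).
    assert (S4 : (a - y) ^ 2 * W1 * B <= 2 * ((x - y) ^ 3 - (a - y) ^ 3) * A * B)
      by (apply Rmult_le_compat_r; [lra | exact Hlow]).
    apply Rmult_le_reg_r with (2 * A * B); [apply Rmult_lt_0_compat; lra | lra].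
Qed.

Definition kernel3 (x y z t : R) : R := pos_cube (x - t) + pos_cube (y - t) + pos_cube (z - t).

Lemma kernel_triple (x y z t : R) : kernel [x; y; z] t = kernel3 x y z t.
Proof. unfold kernel, kernel3. rewrite sumf_triple. reflexivity. Qed.

Lemma cube_gap_scaling (x a b y t : R) : y <= t -> t <= b -> b <= a -> a <= x ->
  (b - t) ^ 2 * ((x - y) ^ 3 - (a - y) ^ 3) <= (b - y) ^ 2 * ((x - t) ^ 3 - (a - t) ^ 3).
Proof.
  intros.
  set (P' := (b - t) * (x - y)). set (P := (b - y) * (x - t)).
  set (Q' := (b - t) * (a - y)). set (Q := (b - y) * (a - t)).
  assert (HP : 0 <= P' <= P) by (unfold P', P; split; nra).
  assert (HQ : 0 <= Q' <= Q) by (unfold Q', Q; split; nra).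
  assert (Hsum : P' ^ 2 + P' * Q' + Q' ^ 2 <= P ^ 2 + P * Q + Q ^ 2).
  { assert (P' ^ 2 <= P ^ 2) by (apply pow_incr; lra).
    assert (Q' ^ 2 <= Q ^ 2) by (apply pow_incr; lra).
    assert (P' * Q' <= P * Q) by (apply Rmult_le_compat; lra).
    lra. }
  replace ((b - t) ^ 2 * ((x - y) ^ 3 - (a - y) ^ 3))
    with ((x - a) * (P' ^ 2 + P' * Q' + Q' ^ 2)) by (unfold P', Q'; ring).
  replace ((b - y) ^ 2 * ((x - t) ^ 3 - (a - t) ^ 3))
    with ((x - a) * (P ^ 2 + P * Q + Q ^ 2)) by (unfold P, Q; ring).
  apply Rmult_le_compat_l; lra.
Qed.

(* Middle region y <= t <= b: propagate the gap at y. *)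
Lemma kernel_mid (x a b y t : R) : y <= t -> t <= b -> b <= a -> a <= x ->
  (b - y) ^ 3 <= (x - y) ^ 3 - (a - y) ^ 3 -> (a - t) ^ 3 + (b - t) ^ 3 <= (x - t) ^ 3.
Proof.
  intros Hyt Htb Hba Hax Hgap.
  assert ((a - t) ^ 3 <= (x - t) ^ 3) by (apply pow_incr; lra).
  destruct (Req_dec b y) as [-> | Hby].
  - replace t with y by lra. replace ((y - y) ^ 3) with 0 by ring. lra.
  - pose proof (cube_gap_scaling x a b y t Hyt Htb Hba Hax) as Hscale.
    assert (Hshrink : (b - y) ^ 2 * (b - t) ^ 3 <= (b - t) ^ 2 * (b - y) ^ 3).
    { assert (0 <= (b - t) ^ 2 * (b - y) ^ 2 * (t - y))
        by (apply Rmult_le_pos; [apply Rmult_le_pos; apply pow2_ge_0 | lra]).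
      lra. }
    assert ((b - t) ^ 2 * (b - y) ^ 3 <= (b - t) ^ 2 * ((x - y) ^ 3 - (a - y) ^ 3))
      by (apply Rmult_le_compat_l; [apply pow2_ge_0 | exact Hgap]).
    apply Rmult_le_reg_l with ((b - y) ^ 2); [apply pow_lt; lra | lra].
Qed.

Lemma tail_phi_mono (t y u1 u2 : R) : 0 <= u1 -> u1 <= u2 -> u2 <= t -> t <= y ->
  t ^ 2 * (y - u2) ^ 3 - y ^ 2 * (t - u2) ^ 3 <= t ^ 2 * (y - u1) ^ 3 - y ^ 2 * (t - u1) ^ 3.
Proof.
  intros.
  set (P1 := t * (y - u1)). set (P1' := y * (t - u1)).
  set (P2 := t * (y - u2)). set (P2' := y * (t - u2)).
  assert (HP1 : 0 <= P1' <= P1) by (unfold P1', P1; split; nra).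
  assert (HP2 : 0 <= P2' <= P2) by (unfold P2', P2; split; nra).
  assert (P1' ^ 2 <= P1 ^ 2) by (apply pow_incr; lra).
  assert (P2' ^ 2 <= P2 ^ 2) by (apply pow_incr; lra).
  assert (P1' * P2' <= P1 * P2) by (apply Rmult_le_compat; lra).
  assert (0 <= (u2 - u1) * ((P1 ^ 2 - P1' ^ 2) + (P1 * P2 - P1' * P2') + (P2 ^ 2 - P2' ^ 2)))
    by (apply Rmult_le_pos; lra).
  unfold P1, P1', P2, P2' in *. lra.
Qed.

Lemma tail_ratio (c z y t : R) : 0 <= c -> c <= z -> z <= y -> 0 <= t -> t <= y ->
  y ^ 2 * (pos_cube (t - c) - pos_cube (t - z)) <= t ^ 2 * ((y - c) ^ 3 - (y - z) ^ 3).
Proof.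
  intros.
  assert (Hyz : (y - z) ^ 3 <= (y - c) ^ 3) by (apply pow_incr; lra).
  destruct (Rle_lt_dec t c) as [Htc | Hct].
  - rewrite !pos_cube_of_nonpos by lra.
    assert (0 <= t ^ 2 * ((y - c) ^ 3 - (y - z) ^ 3))
      by (apply Rmult_le_pos; [apply pow2_ge_0 | lra]).
    lra.
  - rewrite (pos_cube_of_nonneg (t - c)) by lra.
    destruct (Rle_lt_dec t z) as [Htz | Hzt].
    + rewrite pos_cube_of_nonpos by lra.
      pose proof (tail_phi_mono t y c t ltac:(lra) ltac:(lra) ltac:(lra) ltac:(lra)).
      assert (t ^ 2 * (y - z) ^ 3 <= t ^ 2 * (y - t) ^ 3)
        by (apply Rmult_le_compat_l; [apply pow2_ge_0 | apply pow_incr; lra]).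
      replace ((t - t) ^ 3) with 0 in * by ring. lra.
    + rewrite pos_cube_of_nonneg by lra.
      pose proof (tail_phi_mono t y c z ltac:(lra) ltac:(lra) ltac:(lra) ltac:(lra)). lra.
Qed.

Lemma cube_shift_balance (x y z a b c s : R) :
  x ^ 2 + y ^ 2 + z ^ 2 = a ^ 2 + b ^ 2 + c ^ 2 ->
  x ^ 3 + y ^ 3 + z ^ 3 = a ^ 3 + b ^ 3 + c ^ 3 ->
  (x - s) ^ 3 + (y - s) ^ 3 + (z - s) ^ 3 - ((a - s) ^ 3 + (b - s) ^ 3 + (c - s) ^ 3)
  = 3 * s ^ 2 * (x + y + z - (a + b + c)).
Proof.
  intros h2 h3.
  assert (s * (x ^ 2 + y ^ 2 + z ^ 2) = s * (a ^ 2 + b ^ 2 + c ^ 2)) by (rewrite h2; reflexivity).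
  lra.
Qed.

(* Low region 0 <= t <= y: the kernel difference is 3t^2 Delta - psi(t), and
   tail_ratio scales the nonnegative value at t = y down to t. *)
Lemma kernel_low (x y z a b c t : R) :
  0 <= c -> c <= z -> z <= y -> y <= b -> b <= a -> a <= x ->
  x ^ 2 + y ^ 2 + z ^ 2 = a ^ 2 + b ^ 2 + c ^ 2 ->
  x ^ 3 + y ^ 3 + z ^ 3 = a ^ 3 + b ^ 3 + c ^ 3 ->
  (b - y) ^ 3 <= (x - y) ^ 3 - (a - y) ^ 3 ->
  0 <= t -> t <= y -> kernel3 a b c t <= kernel3 x y z t.
Proof.
  intros Hc Hcz Hzy Hyb Hba Hax h2 h3 Hgap Ht Hty.
  pose proof (cube_shift_balance x y z a b c t h2 h3) as Et.
  pose proof (cube_shift_balance x y z a b c y h2 h3) as Ey.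
  pose proof (tail_ratio c z y t Hc Hcz Hzy Ht Hty) as Hratio.
  set (Delta := x + y + z - (a + b + c)) in *.
  set (psi := pos_cube (t - c) - pos_cube (t - z)) in *.
  set (K := (y - c) ^ 3 - (y - z) ^ 3) in *.
  assert (Dt : kernel3 x y z t - kernel3 a b c t = 3 * t ^ 2 * Delta - psi).
  { unfold kernel3, psi.
    rewrite (pos_cube_of_nonneg (x - t)), (pos_cube_of_nonneg (y - t)),
      (pos_cube_of_nonneg (a - t)), (pos_cube_of_nonneg (b - t)),
      (pos_cube_reflect (z - t)), (pos_cube_reflect (c - t)) by lra.
    replace (- (z - t)) with (t - z) by ring. replace (- (c - t)) with (t - c) by ring.
    lra. }
  assert (Dy : 0 <= 3 * y ^ 2 * Delta - K) by (unfold K; replace ((y - y) ^ 3) with 0 in Ey by ring; lra).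
  destruct (Req_dec t 0) as [-> | Ht0].
  - assert (psi = 0) by (unfold psi; rewrite !pos_cube_of_nonpos by lra; ring). nra.
  - assert (0 <= t ^ 2 * (3 * y ^ 2 * Delta - K)) by (apply Rmult_le_pos; [apply pow2_ge_0 | exact Dy]).
    assert (Hy : 0 < y ^ 2) by (apply pow_lt; lra).
    assert (0 <= y ^ 2 * (3 * t ^ 2 * Delta - psi)) by lra.
    assert (0 <= 3 * t ^ 2 * Delta - psi) by (apply Rmult_le_reg_l with (y ^ 2); lra).
    lra.
Qed.

Lemma kernel3_sorted (x y z a b c t : R) :
  0 <= z -> z <= y -> y <= x -> 0 <= c -> c <= b -> b <= a -> a <= x ->
  x ^ 2 + y ^ 2 + z ^ 2 = a ^ 2 + b ^ 2 + c ^ 2 ->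
  x ^ 3 + y ^ 3 + z ^ 3 = a ^ 3 + b ^ 3 + c ^ 3 ->
  0 <= t -> kernel3 a b c t <= kernel3 x y z t.
Proof.
  intros Hz Hzy Hyx Hc Hcb Hba Hax h2 h3 Ht.
  destruct (interlacing x y z a b c Hz Hzy Hyx Hc Hcb Hba Hax h2 h3) as [Hyb Hcz].
  assert (Hgap : (b - y) ^ 3 <= (x - y) ^ 3 - (a - y) ^ 3).
  { apply (gap_at_y x a b y z); try lra.
    pose proof (gcub_balance x y z a b c z h2 h3). pose proof (gcub_min z c Hz Hc). lra. }
  unfold kernel3. destruct (Rle_lt_dec b t) as [Hbt | Htb]; [|destruct (Rle_lt_dec y t) as [Hyt | Hty]].
  - rewrite (pos_cube_of_nonpos (y - t)), (pos_cube_of_nonpos (z - t)),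
      (pos_cube_of_nonpos (b - t)), (pos_cube_of_nonpos (c - t)) by lra.
    pose proof (pos_cube_mono (a - t) (x - t) ltac:(lra)). lra.
  - rewrite (pos_cube_of_nonpos (y - t)), (pos_cube_of_nonpos (z - t)),
      (pos_cube_of_nonpos (c - t)), !pos_cube_of_nonneg by lra.
    pose proof (kernel_mid x a b y t Hyt ltac:(lra) Hba Hax Hgap). lra.
  - apply kernel_low; lra.
Qed.

Lemma sort3 (x y z : R) : exists p q r, r <= q /\ q <= p /\ Permutation [x; y; z] [p; q; r].
Proof.
  destruct (Rle_lt_dec y x), (Rle_lt_dec z y), (Rle_lt_dec z x).
  all: first
    [ exists x, y, z; split; [|split]; [lra | lra | apply Permutation_refl]
    | exists x, z, y; split; [|split]; [lra | lra | apply perm_skip, perm_swap]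
    | exists y, x, z; split; [|split]; [lra | lra | apply perm_swap]
    | exists y, z, x; split; [|split]; [lra | lra | exact (Permutation_cons_append [y; z] x)]
    | exists z, x, y; split; [|split];
        [lra | lra | exact (Permutation_sym (Permutation_cons_append [x; y] z))]
    | exists z, y, x; split; [|split]; [lra | lra | exact (Permutation_rev [x; y; z])] ].
Qed.

Lemma kernel_perm (L1 L2 : list R) (t : R) : Permutation L1 L2 -> kernel L1 t = kernel L2 t.
Proof. apply sumf_perm. Qed.

Lemma kernel3_dominated (x y z a b c M t : R) :
  (forall w, In w [x; y; z] -> 0 <= w) -> (forall w, In w [a; b; c] -> 0 <= w) ->
  moment 2 [x; y; z] = moment 2 [a; b; c] -> moment 3 [x; y; z] = moment 3 [a; b; c] ->
  In M [x; y; z] -> (forall w, In w [a; b; c] -> w <= M) ->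
  0 <= t -> kernel [a; b; c] t <= kernel [x; y; z] t.
Proof.
  intros HX HA h2 h3 HM Hdom Ht.
  destruct (sort3 x y z) as (x' & y' & z' & Hzy & Hyx & PX).
  destruct (sort3 a b c) as (a' & b' & c' & Hcb & Hba & PA).
  assert (Hz : 0 <= z') by (apply HX, (Permutation_in _ (Permutation_sym PX)); simpl; auto).
  assert (Hc : 0 <= c') by (apply HA, (Permutation_in _ (Permutation_sym PA)); simpl; auto).
  assert (HMx : M <= x')
    by (destruct (Permutation_in _ PX HM) as [<- | [<- | [<- | []]]]; lra).
  assert (Hax : a' <= x').
  { apply Rle_trans with M; [|exact HMx].
    apply Hdom, (Permutation_in _ (Permutation_sym PA)). left. reflexivity. }
  unfold moment in h2, h3.
  rewrite (sumf_perm _ _ _ PX), (sumf_perm _ _ _ PA), !sumf_triple in h2.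
  rewrite (sumf_perm _ _ _ PX), (sumf_perm _ _ _ PA), !sumf_triple in h3.
  rewrite (kernel_perm _ _ t PX), (kernel_perm _ _ t PA), !kernel_triple.
  apply kernel3_sorted; assumption.
Qed.

Lemma symm_triple_sufficiency (x y z a b c : R) :
  0 <= x -> 0 <= y -> 0 <= z -> 0 <= a -> 0 <= b -> 0 <= c ->
  x ^ 2 + y ^ 2 + z ^ 2 = a ^ 2 + b ^ 2 + c ^ 2 ->
  x ^ 3 + y ^ 3 + z ^ 3 = a ^ 3 + b ^ 3 + c ^ 3 ->
  Rmax x (Rmax y z) >= Rmax a (Rmax b c) ->
  forall f, four_diff_nonneg f -> sumf f (symm [x; y; z]) >= sumf f (symm [a; b; c]).
Proof.
  intros Hx Hy Hz Ha Hb Hc h2 h3 HM.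
  assert (HX : forall w, In w [x; y; z] -> 0 <= w) by (intros w [<- | [<- | [<- | []]]]; assumption).
  assert (HA : forall w, In w [a; b; c] -> 0 <= w) by (intros w [<- | [<- | [<- | []]]]; assumption).
  assert (Hm2 : moment 2 [x; y; z] = moment 2 [a; b; c])
    by (unfold moment; rewrite !sumf_triple; exact h2).
  assert (Hm3 : moment 3 [x; y; z] = moment 3 [a; b; c])
    by (unfold moment; rewrite !sumf_triple; exact h3).
  apply maj4_of_kernel; [apply equal_moments3_symm; [reflexivity | exact Hm2] |].
  apply kernel_symm_le; [exact HX | exact HA | reflexivity | exact Hm2 |].
  intros t Ht. apply (kernel3_dominated x y z a b c (Rmax x (Rmax y z))); try assumption.
  - apply Rmax_case; [left; reflexivity | apply Rmax_case; simpl; auto].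
  - pose proof (Rmax_l a (Rmax b c)). pose proof (Rmax_r a (Rmax b c)).
    pose proof (Rmax_l b c). pose proof (Rmax_r b c).
    intros w [<- | [<- | [<- | []]]]; lra.
Qed.

Lemma symm_triple_necessity (x y z a b c : R) :
  0 <= x -> 0 <= y -> 0 <= z ->
  (forall f, four_diff_nonneg f -> sumf f (symm [x; y; z]) >= sumf f (symm [a; b; c])) ->
  Rmax x (Rmax y z) >= Rmax a (Rmax b c).
Proof.
  intros Hx Hy Hz Hmaj.
  pose proof (Rmax_l x (Rmax y z)). pose proof (Rmax_r x (Rmax y z)).
  pose proof (Rmax_l y z). pose proof (Rmax_r y z).
  set (M := Rmax x (Rmax y z)) in *.
  assert (Hbound : forall v, In v (symm [a; b; c]) -> v <= M).
  { apply (maj_upper_bound _ _ M Hmaj). intros u Hu. simpl in Hu.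
    repeat destruct Hu as [<- | Hu]; lra. }
  apply Rle_ge, Rmax_lub; [|apply Rmax_lub]; apply Hbound; simpl; tauto.
Qed.

Theorem mainTheorem20 (x y z a b c : R)
  (hx : 0 <= x) (hy : 0 <= y) (hz : 0 <= z)
  (ha : 0 <= a) (hb : 0 <= b) (hc : 0 <= c)
  (h2 : x ^ 2 + y ^ 2 + z ^ 2 = a ^ 2 + b ^ 2 + c ^ 2)
  (h3 : x ^ 3 + y ^ 3 + z ^ 3 = a ^ 3 + b ^ 3 + c ^ 3) :
  maj4 [x; y; z; - z; - y; - x] [a; b; c; - c; - b; - a]
  <-> Rmax x (Rmax y z) >= Rmax a (Rmax b c).
Proof.
  change [x; y; z; - z; - y; - x] with (symm [x; y; z]).
  change [a; b; c; - c; - b; - a] with (symm [a; b; c]).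
  split.
  - intros [_ Hmaj]. exact (symm_triple_necessity x y z a b c hx hy hz Hmaj).
  - intro HM. split; [reflexivity |].
    exact (symm_triple_sufficiency x y z a b c hx hy hz ha hb hc h2 h3 HM).
Qed.
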